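(* Let $F_1,\dots,F_l\in\mathfrak{M}_n^{+}$ satisfy $\sum_{j=1}^l F_j=I_n$, let $R\in\mathfrak{M}_n^{+}$ and $N\in\mathbb{N}$. Then \[ \sum_{k_1,\dots,k_N}\big\|F_{k_1}e^{R/N}F_{k_2}e^{R/N}\cdots F_{k_N}e^{R/N}\big\|\le n\,\|e^{R}\|, \] where the sum is over all $(k_1,\dots,k_N)\in\{1,\dots,l\}^N$.
   Context: $\mathfrak{M}_n^{+}$ is the set of $n\times n$ matrices all of whose entries are non-negative real numbers; $I_n$ is the identity matrix; $\|\cdot\|$ is the operator norm. *)

(* real n x n matrices as functions nat -> nat -> R,
   only entries with indices < n are meaningful. *)
From Stdlib Require Import Reals Lra List Arith Factorial Classical ClassicalEpsilon.
Open Scope R_scope.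

Definition mat := nat -> nat -> R.
Definition vec := nat -> R.

Fixpoint rsum (k : nat) (f : nat -> R) : R :=
  match k with
  | O => 0
  | S k' => rsum k' f + f k'
  end.

Definition mat_id : mat := fun i j => if Nat.eq_dec i j then 1 else 0.
Definition mat_mul (n : nat) (A B : mat) : mat :=
  fun i j => rsum n (fun k => A i k * B k j).
Definition mat_scale (c : R) (A : mat) : mat := fun i j => c * A i j.
Fixpoint mat_pow (n : nat) (A : mat) (k : nat) : mat :=
  match k with
  | O => mat_id
  | S k' => mat_mul n A (mat_pow n A k')
  end.

Definition nonneg_mat (n : nat) (A : mat) : Prop :=
  forall i j, (i < n)%nat -> (j < n)%nat -> 0 <= A i j.

Definition mat_exp (n : nat) (A : mat) : mat :=
  fun i j => epsilon (inhabits 0)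
    (fun s => infinite_sum (fun k => mat_pow n A k i j / INR (fact k)) s).

Definition vnorm (n : nat) (x : vec) : R := sqrt (rsum n (fun i => x i ^ 2)).
Definition mat_vec (n : nat) (A : mat) (x : vec) : vec :=
  fun i => rsum n (fun j => A i j * x j).
Definition opnorm (n : nat) (A : mat) : R :=
  epsilon (inhabits 0)
    (is_lub (fun r => exists x : vec, vnorm n x <= 1 /\ r = vnorm n (mat_vec n A x))).

Fixpoint word_prod (n : nat) (F : nat -> mat) (E : mat) (ks : list nat) : mat :=
  match ks with
  | nil => mat_id
  | k :: ks' => mat_mul n (mat_mul n (F k) E) (word_prod n F E ks')
  end.

(* sum of g over all words (k1,...,kN) in {0,...,l-1}^N *)
Fixpoint sum_words (l N : nat) (g : list nat -> R) : R :=
  match N with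
  | O => g nil
  | S N' => rsum l (fun k => sum_words l N' (fun ks => g (k :: ks)))
  end.

(* Write E = e^{R/N}. Because the F_k sum to the identity, summing the products
   F_{k1} E ... F_{kN} E entrywise over all words gives E^N. All these matrices
   are nonnegative, and the operator norm of a nonnegative matrix is at most the
   sum of its entries, so the left-hand side is at most the entry sum of E^N.
   Multiplying truncated exponential series and comparing with the binomial
   expansion shows E^N <= e^R entrywise; finally, testing against the unit vector
   (1, ..., 1) / sqrt n and applying Cauchy-Schwarz bounds the entry sum of any
   matrix by n times its operator norm. *)

From Stdlib Require Import Reals Lra Lia List Factorial ClassicalEpsilon FunctionalExtensionality.
Open Scope R_scope.

Lemma rsum_ext m f g :
  (forall k, (k < m)%nat -> f k = g k) -> rsum m f = rsum m g.
Proof.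
  induction m as [|m IH]; intros H; simpl; [reflexivity|].
  f_equal; [apply IH; intros k Hk|]; apply H; lia.
Qed.

Lemma rsum_le m f g :
  (forall k, (k < m)%nat -> f k <= g k) -> rsum m f <= rsum m g.
Proof.
  induction m as [|m IH]; intros H; simpl; [lra|].
  apply Rplus_le_compat; [apply IH; intros k Hk|]; apply H; lia.
Qed.

Lemma rsum_nonneg m f : (forall k, (k < m)%nat -> 0 <= f k) -> 0 <= rsum m f.
Proof.
  induction m as [|m IH]; intros H; simpl; [lra|].
  apply Rplus_le_le_0_compat; [apply IH; intros k Hk|]; apply H; lia.
Qed.

Lemma rsum_add m f g : rsum m (fun k => f k + g k) = rsum m f + rsum m g.
Proof. induction m as [|m IH]; simpl; [ring|rewrite IH; ring]. Qed.

Lemma rsum_mult_l m c f : rsum m (fun k => c * f k) = c * rsum m f.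
Proof. induction m as [|m IH]; simpl; [ring|rewrite IH; ring]. Qed.

Lemma rsum_mult_r m c f : rsum m (fun k => f k * c) = rsum m f * c.
Proof. induction m as [|m IH]; simpl; [ring|rewrite IH; ring]. Qed.

Lemma rsum_const m c : rsum m (fun _ => c) = INR m * c.
Proof. induction m as [|m IH]; [simpl; ring|cbn [rsum]; rewrite IH, S_INR; ring]. Qed.

Lemma rsum_swap m p (f : nat -> nat -> R) :
  rsum m (fun i => rsum p (fun j => f i j)) = rsum p (fun j => rsum m (fun i => f i j)).
Proof.
  induction m as [|m IH]; simpl.
  - induction p as [|p IHp]; simpl; [reflexivity|rewrite <- IHp; ring].
  - rewrite IH, <- rsum_add. reflexivity.
Qed.

Lemma rsum_le_len m m' f :
  (m <= m')%nat -> (forall k, (k < m')%nat -> 0 <= f k) -> rsum m f <= rsum m' f.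
Proof.
  intros Hm H. induction Hm as [|m' Hm IH]; [lra|]. simpl.
  assert (0 <= f m') by (apply H; lia).
  assert (rsum m f <= rsum m' f) by (apply IH; intros; apply H; lia).
  lra.
Qed.

Lemma rsum_term_le m f k :
  (k < m)%nat -> (forall k, (k < m)%nat -> 0 <= f k) -> f k <= rsum m f.
Proof.
  intros Hk H. apply Rle_trans with (rsum (S k) f); [|apply rsum_le_len; auto].
  simpl. assert (0 <= rsum k f) by (apply rsum_nonneg; intros; apply H; lia).
  lra.
Qed.

Lemma Rabs_rsum_le m f : Rabs (rsum m f) <= rsum m (fun k => Rabs (f k)).
Proof.
  induction m as [|m IH]; simpl; [rewrite Rabs_R0; lra|].
  eapply Rle_trans; [apply Rabs_triang|lra].
Qed.

Lemma sum_f_R0_rsum f m : sum_f_R0 f m = rsum (S m) f.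
Proof. induction m as [|m IH]; [simpl; ring|cbn [sum_f_R0]; rewrite IH; reflexivity]. Qed.

Lemma rsum_antidiagonal Q (f : nat -> nat -> R) :
  rsum Q (fun d => rsum (S d) (fun a => f a (d - a)%nat)) =
  rsum Q (fun a => rsum (Q - a) (fun b => f a b)).
Proof.
  induction Q as [|Q IH]; [reflexivity|].
  change (rsum (S Q) ?g) with (rsum Q g + g Q). rewrite IH.
  rewrite (rsum_ext Q (fun a => rsum (S Q - a) (fun b => f a b))
             (fun a => rsum (Q - a) (fun b => f a b) + f a (Q - a)%nat)).
  - rewrite rsum_add. replace (S Q - Q)%nat with 1%nat by lia.
    simpl. rewrite Nat.sub_diag. ring.
  - intros a Ha. replace (S Q - a)%nat with (S (Q - a)) by lia. reflexivity.
Qed.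

Lemma rsum_delta m i g : (i < m)%nat ->
  rsum m (fun k => (if Nat.eq_dec i k then 1 else 0) * g k) = g i.
Proof.
  induction m as [|m IH]; intros Hi; [lia|]. cbn [rsum].
  destruct (Nat.eq_dec i m) as [->|Him].
  - rewrite (rsum_ext m _ (fun _ => 0)), rsum_const; [ring|].
    intros k Hk. destruct (Nat.eq_dec m k); [lia|ring].
  - rewrite IH by lia. ring.
Qed.

Lemma rsum_sq_le_sq_rsum_abs m (y : nat -> R) :
  rsum m (fun i => y i ^ 2) <= rsum m (fun i => Rabs (y i)) ^ 2.
Proof.
  induction m as [|m IH]; simpl in *; [lra|].
  assert (0 <= rsum m (fun i => Rabs (y i))) by (apply rsum_nonneg; intros; apply Rabs_pos).
  assert (Rabs (y m) * Rabs (y m) = y m * y m) by (rewrite <- Rabs_mult; apply Rabs_right; nra).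
  assert (0 <= Rabs (y m)) by apply Rabs_pos.
  nra.
Qed.

Lemma rsum_sq_le m (y : nat -> R) : rsum m y ^ 2 <= INR m * rsum m (fun i => y i ^ 2).
Proof.
  induction m as [|m IH]; [simpl; lra|]. cbn [rsum]. rewrite S_INR.
  set (S := rsum m y) in *. set (Q := rsum m (fun i => y i ^ 2)) in *.
  assert (HQ : 0 <= Q) by (apply rsum_nonneg; intros; apply pow2_ge_0).
  assert (Hm : 0 <= INR m) by apply pos_INR.
  (* from [(m y_m - S)^2 >= 0] and the induction hypothesis *)
  assert (Hcross : 2 * S * y m <= Q + INR m * y m ^ 2).
  { destruct (Req_dec (INR m) 0) as [Hm0|Hm0].
    - rewrite Hm0 in IH. assert (S = 0) by nra. subst S. nra.
    - apply Rmult_le_reg_l with (INR m); [lra|].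
      assert (0 <= (INR m * y m - S) ^ 2) by apply pow2_ge_0. nra. }
  nra.
Qed.

Lemma Un_cv_const c : Un_cv (fun _ => c) c.
Proof.
  intros eps Heps. exists 0%nat. intros. unfold Rdist. rewrite Rminus_diag, Rabs_R0. lra.
Qed.

Lemma rsum_cv m (u : nat -> nat -> R) (l : nat -> R) :
  (forall k, (k < m)%nat -> Un_cv (u k) (l k)) ->
  Un_cv (fun M => rsum m (fun k => u k M)) (rsum m l).
Proof.
  induction m as [|m IH]; intros H; simpl; [apply Un_cv_const|].
  apply CV_plus; [apply IH; intros|]; apply H; lia.
Qed.

Lemma mat_scale_inv c A : c <> 0 -> mat_scale c (mat_scale (/ c) A) = A.
Proof.
  intros Hc. unfold mat_scale.
  extensionality i. extensionality j. field. assumption.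
Qed.

Section Matrices.

Variable n : nat.

Definition mat_Un_cv (U : nat -> mat) (A : mat) : Prop :=
  forall i j, (i < n)%nat -> (j < n)%nat -> Un_cv (fun M => U M i j) (A i j).

Lemma mat_mul_id_l A i j : (i < n)%nat -> mat_mul n mat_id A i j = A i j.
Proof. exact (rsum_delta n i (fun k => A k j)). Qed.

Lemma mat_mul_assoc A B C i j :
  mat_mul n (mat_mul n A B) C i j = mat_mul n A (mat_mul n B C) i j.
Proof.
  unfold mat_mul.
  rewrite (rsum_ext _ _ (fun m => rsum n (fun k => A i k * B k m * C m j)))
    by (intros; rewrite <- rsum_mult_r; reflexivity).
  rewrite rsum_swap. apply rsum_ext. intros k _.
  rewrite <- rsum_mult_l. apply rsum_ext. intros; ring.
Qed.

Lemma mat_mul_ext_r A B C i j :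
  (forall k, (k < n)%nat -> B k j = C k j) -> mat_mul n A B i j = mat_mul n A C i j.
Proof. intros H. apply rsum_ext. intros k Hk. rewrite H by assumption. reflexivity. Qed.

Lemma mat_pow_add A a b i j : (i < n)%nat ->
  mat_mul n (mat_pow n A a) (mat_pow n A b) i j = mat_pow n A (a + b) i j.
Proof.
  revert i j. induction a as [|a IH]; intros i j Hi; simpl.
  - apply mat_mul_id_l, Hi.
  - rewrite mat_mul_assoc. apply mat_mul_ext_r. intros k Hk. apply IH, Hk.
Qed.

Lemma mat_pow_scale c A k i j : mat_pow n (mat_scale c A) k i j = c ^ k * mat_pow n A k i j.
Proof.
  revert i j. induction k as [|k IH]; intros i j; simpl; [ring|].
  unfold mat_mul, mat_scale. rewrite <- rsum_mult_l. apply rsum_ext. intros m _.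
  rewrite IH. ring.
Qed.

Lemma nonneg_mat_id : nonneg_mat n mat_id.
Proof. intros i j _ _. unfold mat_id. destruct Nat.eq_dec; lra. Qed.

Lemma nonneg_mat_mul A B : nonneg_mat n A -> nonneg_mat n B -> nonneg_mat n (mat_mul n A B).
Proof.
  intros HA HB i j Hi Hj. apply rsum_nonneg. intros k Hk. apply Rmult_le_pos; auto.
Qed.

Lemma nonneg_mat_pow A k : nonneg_mat n A -> nonneg_mat n (mat_pow n A k).
Proof.
  intros HA. induction k as [|k IH]; simpl; [apply nonneg_mat_id|apply nonneg_mat_mul; assumption].
Qed.

Lemma nonneg_mat_scale c A : 0 <= c -> nonneg_mat n A -> nonneg_mat n (mat_scale c A).
Proof. intros Hc HA i j Hi Hj. apply Rmult_le_pos; auto. Qed.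

Lemma mat_mul_le_compat_l A B C i j : (i < n)%nat -> nonneg_mat n A ->
  (forall k, (k < n)%nat -> B k j <= C k j) -> mat_mul n A B i j <= mat_mul n A C i j.
Proof.
  intros Hi HA H. apply rsum_le. intros k Hk. apply Rmult_le_compat_l; auto.
Qed.

Lemma mat_pow_le_pow A a k i j : nonneg_mat n A ->
  (forall i j, (i < n)%nat -> (j < n)%nat -> A i j <= a) ->
  (i < n)%nat -> (j < n)%nat -> mat_pow n A k i j <= (INR n * a) ^ k.
Proof.
  intros HA Ha. revert i j. induction k as [|k IH]; intros i j Hi Hj; simpl.
  - unfold mat_id. destruct Nat.eq_dec; lra.
  - replace (INR n * a * (INR n * a) ^ k) with (rsum n (fun _ => a * (INR n * a) ^ k))
      by (rewrite rsum_const; ring).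
    apply rsum_le. intros m Hm.
    apply Rmult_le_compat; auto. apply nonneg_mat_pow; assumption.
Qed.

Lemma mat_mul_cv U V A B :
  mat_Un_cv U A -> mat_Un_cv V B -> mat_Un_cv (fun M => mat_mul n (U M) (V M)) (mat_mul n A B).
Proof.
  intros HU HV i j Hi Hj.
  apply (rsum_cv n (fun k M => U M i k * V M k j) (fun k => A i k * B k j)).
  intros k Hk. apply CV_mult; auto.
Qed.

Lemma mat_pow_cv U A k : mat_Un_cv U A -> mat_Un_cv (fun M => mat_pow n (U M) k) (mat_pow n A k).
Proof.
  intros HU. induction k as [|k IH]; simpl.
  - intros i j _ _. apply Un_cv_const.
  - apply mat_mul_cv; assumption.
Qed.

End Matrices.

Definition exp_trunc n (A : mat) (t : R) (M : nat) : mat :=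
  fun i j => rsum M (fun k => t ^ k / INR (fact k) * mat_pow n A k i j).

Lemma exp_coef_nonneg t k : 0 <= t -> 0 <= t ^ k / INR (fact k).
Proof.
  intros Ht. apply Rmult_le_pos; [apply pow_le, Ht|].
  left. apply Rinv_0_lt_compat, INR_fact_lt_0.
Qed.

Section ExpTrunc.

Variables (n : nat) (A : mat).

Lemma exp_trunc_scale c t M i j :
  exp_trunc n (mat_scale c A) t M i j = exp_trunc n A (c * t) M i j.
Proof.
  apply rsum_ext. intros k _. rewrite mat_pow_scale, Rpow_mult_distr. unfold Rdiv. ring.
Qed.

Lemma exp_trunc_mul s t M P i j : (i < n)%nat ->
  mat_mul n (exp_trunc n A s M) (exp_trunc n A t P) i j =
  rsum M (fun a => rsum P (fun b =>
    s ^ a / INR (fact a) * (t ^ b / INR (fact b)) * mat_pow n A (a + b) i j)).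
Proof.
  intros Hi. unfold mat_mul, exp_trunc.
  rewrite (rsum_ext n _ (fun m => rsum M (fun a => rsum P (fun b =>
    s ^ a / INR (fact a) * (t ^ b / INR (fact b)) *
    (mat_pow n A a i m * mat_pow n A b m j))))).
  - rewrite rsum_swap. apply rsum_ext. intros a _.
    rewrite rsum_swap. apply rsum_ext. intros b _.
    rewrite rsum_mult_l, <- (mat_pow_add n A a b i j Hi). reflexivity.
  - intros m _. rewrite <- rsum_mult_r. apply rsum_ext. intros a _.
    rewrite <- rsum_mult_l. apply rsum_ext. intros b _. ring.
Qed.

Lemma exp_trunc_add s t Q i j :
  exp_trunc n A (s + t) Q i j =
  rsum Q (fun d => rsum (S d) (fun a =>
    s ^ a / INR (fact a) * (t ^ (d - a) / INR (fact (d - a))) * mat_pow n A (a + (d - a)) i j)).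
Proof.
  apply rsum_ext. intros d _.
  rewrite binomial, sum_f_R0_rsum. unfold Rdiv at 1. rewrite <- !rsum_mult_r.
  apply rsum_ext. intros a Ha.
  replace (a + (d - a))%nat with d by lia. unfold C.
  pose proof (INR_fact_neq_0 a). pose proof (INR_fact_neq_0 (d - a)). pose proof (INR_fact_neq_0 d).
  field. auto.
Qed.

Hypothesis hA : nonneg_mat n A.

Lemma exp_trunc_nonneg t M : 0 <= t -> nonneg_mat n (exp_trunc n A t M).
Proof.
  intros Ht i j Hi Hj. apply rsum_nonneg. intros k _.
  apply Rmult_le_pos; [apply exp_coef_nonneg, Ht|apply nonneg_mat_pow; assumption].
Qed.

(* The Cauchy product of two truncations only misses terms of the binomial expansion. *)
Lemma exp_trunc_mul_le s t M P i j : 0 <= s -> 0 <= t -> (i < n)%nat -> (j < n)%nat ->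
  mat_mul n (exp_trunc n A s M) (exp_trunc n A t P) i j <= exp_trunc n A (s + t) (M + P) i j.
Proof.
  intros Hs Ht Hi Hj.
  set (g a b := s ^ a / INR (fact a) * (t ^ b / INR (fact b)) * mat_pow n A (a + b) i j).
  assert (Hg : forall a b, 0 <= g a b).
  { intros a b. apply Rmult_le_pos; [apply Rmult_le_pos|apply nonneg_mat_pow];
      auto using exp_coef_nonneg. }
  rewrite exp_trunc_mul, exp_trunc_add by assumption.
  change (rsum M (fun a => rsum P (g a)) <=
          rsum (M + P) (fun d => rsum (S d) (fun a => g a (d - a)%nat))).
  rewrite rsum_antidiagonal.
  apply Rle_trans with (rsum M (fun a => rsum (M + P - a) (g a))).
  - apply rsum_le. intros a Ha. apply rsum_le_len; [lia|auto].
  - apply rsum_le_len; [lia|]. intros a _. apply rsum_nonneg. auto.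
Qed.

Lemma exp_trunc_pow_le t M N i j : 0 <= t -> (i < n)%nat -> (j < n)%nat ->
  mat_pow n (exp_trunc n A t M) N i j <= exp_trunc n A (INR N * t) (N * M + 1) i j.
Proof.
  intros Ht. revert i j. induction N as [|N IH]; intros i j Hi Hj.
  - unfold exp_trunc. simpl. lra.
  - cbn [mat_pow]. eapply Rle_trans.
    + apply mat_mul_le_compat_l; [assumption|apply exp_trunc_nonneg, Ht|].
      intros k Hk. apply IH; assumption.
    + replace (INR (S N) * t) with (t + INR N * t) by (rewrite S_INR; ring).
      replace (S N * M + 1)%nat with (M + (N * M + 1))%nat by lia.
      apply exp_trunc_mul_le; auto.
      apply Rmult_le_pos; [apply pos_INR|assumption].
Qed.

Lemma mat_exp_series i j : (i < n)%nat -> (j < n)%nat ->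
  infinite_sum (fun k => mat_pow n A k i j / INR (fact k)) (mat_exp n A i j).
Proof.
  intros Hi Hj. unfold mat_exp. apply epsilon_spec.
  set (a := rsum n (fun i => rsum n (fun j => A i j))).
  assert (Ha : forall i j, (i < n)%nat -> (j < n)%nat -> A i j <= a).
  { intros i' j' Hi' Hj'. apply Rle_trans with (rsum n (fun j => A i' j)).
    - apply (rsum_term_le n (fun j => A i' j)); auto.
    - apply (rsum_term_le n (fun i => rsum n (fun j => A i j))); auto.
      intros; apply rsum_nonneg; auto. }
  (* dominated by the exponential series of [n a] *)
  destruct (Rseries_CV_comp (fun k => mat_pow n A k i j / INR (fact k))
              (fun k => / INR (fact k) * (INR n * a) ^ k)) as [s Hs].
  - intros k. pose proof (mat_pow_le_pow n A a k i j hA Ha Hi Hj).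
    pose proof (nonneg_mat_pow n A k hA i j Hi Hj).
    assert (0 < / INR (fact k)) by apply Rinv_0_lt_compat, INR_fact_lt_0.
    unfold Rdiv. split; [apply Rmult_le_pos; lra|].
    rewrite Rmult_comm. apply Rmult_le_compat_l; lra.
  - apply exist_exp.
  - exists s. exact Hs.
Qed.

Lemma exp_trunc_sum_f_R0 M i j :
  exp_trunc n A 1 (S M) i j = sum_f_R0 (fun k => mat_pow n A k i j / INR (fact k)) M.
Proof.
  rewrite sum_f_R0_rsum. apply rsum_ext. intros k _. rewrite pow1. unfold Rdiv. ring.
Qed.

Lemma exp_trunc_cv : mat_Un_cv n (fun M => exp_trunc n A 1 (S M)) (mat_exp n A).
Proof.
  intros i j Hi Hj. unfold Un_cv. setoid_rewrite exp_trunc_sum_f_R0.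
  apply mat_exp_series; assumption.
Qed.

Lemma exp_trunc_le_mat_exp M i j : (i < n)%nat -> (j < n)%nat ->
  exp_trunc n A 1 (S M) i j <= mat_exp n A i j.
Proof.
  intros Hi Hj. rewrite exp_trunc_sum_f_R0.
  apply sum_incr; [apply mat_exp_series; assumption|].
  intros k. apply Rmult_le_pos.
  - apply nonneg_mat_pow; assumption.
  - left. apply Rinv_0_lt_compat, INR_fact_lt_0.
Qed.

Lemma mat_exp_nonneg : nonneg_mat n (mat_exp n A).
Proof.
  intros i j Hi Hj. eapply Rle_trans; [|apply (exp_trunc_le_mat_exp 0); assumption].
  apply exp_trunc_nonneg; [lra|assumption..].
Qed.

End ExpTrunc.

Lemma mat_pow_mat_exp_le n A N i j : nonneg_mat n A -> (i < n)%nat -> (j < n)%nat ->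
  mat_pow n (mat_exp n A) N i j <= mat_exp n (mat_scale (INR N) A) i j.
Proof.
  intros HA Hi Hj.
  apply Rle_cv_lim with (fun M => mat_pow n (exp_trunc n A 1 (S M)) N i j)
                        (fun _ => mat_exp n (mat_scale (INR N) A) i j).
  - intros M. eapply Rle_trans; [apply exp_trunc_pow_le; auto; lra|].
    rewrite <- exp_trunc_scale. replace (N * S M + 1)%nat with (S (N * S M)) by lia.
    apply exp_trunc_le_mat_exp; auto.
    apply nonneg_mat_scale; [apply pos_INR|assumption].
  - apply mat_pow_cv; [apply exp_trunc_cv, HA|assumption..].
  - apply Un_cv_const.
Qed.

Section Norms.

Variable n : nat.

Definition entry_sum (A : mat) : R := rsum n (fun i => rsum n (fun j => A i j)).

Lemma Rabs_le_vnorm x j : (j < n)%nat -> Rabs (x j) <= vnorm n x.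
Proof.
  intros Hj. rewrite <- sqrt_Rsqr_abs. apply sqrt_le_1_alt. unfold Rsqr.
  replace (x j * x j) with (x j ^ 2) by ring.
  apply (rsum_term_le n (fun i => x i ^ 2)); auto using pow2_ge_0.
Qed.

Lemma vnorm_le_rsum_abs x : vnorm n x <= rsum n (fun i => Rabs (x i)).
Proof.
  unfold vnorm. rewrite <- (sqrt_pow2 (rsum n (fun i => Rabs (x i)))).
  - apply sqrt_le_1_alt, rsum_sq_le_sq_rsum_abs.
  - apply rsum_nonneg. intros; apply Rabs_pos.
Qed.

Lemma rsum_le_sqrt_vnorm y : rsum n y <= sqrt (INR n) * vnorm n y.
Proof.
  apply Rle_trans with (Rabs (rsum n y)); [apply Rle_abs|].
  rewrite <- sqrt_Rsqr_abs. unfold vnorm. rewrite <- sqrt_mult_alt by apply pos_INR.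
  apply sqrt_le_1_alt. unfold Rsqr.
  replace (rsum n y * rsum n y) with (rsum n y ^ 2) by ring.
  apply rsum_sq_le.
Qed.

Lemma vnorm_mat_vec_le A x : vnorm n x <= 1 ->
  vnorm n (mat_vec n A x) <= rsum n (fun i => rsum n (fun j => Rabs (A i j))).
Proof.
  intros Hx. eapply Rle_trans; [apply vnorm_le_rsum_abs|].
  apply rsum_le. intros i Hi. eapply Rle_trans; [apply Rabs_rsum_le|].
  apply rsum_le. intros j Hj. rewrite Rabs_mult.
  pose proof (Rabs_le_vnorm x j Hj). pose proof (Rabs_pos (A i j)). pose proof (Rabs_pos (x j)).
  nra.
Qed.

Lemma opnorm_is_lub A :
  is_lub (fun r => exists x : vec, vnorm n x <= 1 /\ r = vnorm n (mat_vec n A x)) (opnorm n A).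
Proof.
  unfold opnorm. apply epsilon_spec.
  destruct (completeness (fun r => exists x : vec, vnorm n x <= 1 /\ r = vnorm n (mat_vec n A x)))
    as [m Hm]; [| |exists m; exact Hm].
  - exists (rsum n (fun i => rsum n (fun j => Rabs (A i j)))).
    intros r [x [Hx ->]]. apply vnorm_mat_vec_le, Hx.
  - exists (vnorm n (mat_vec n A (fun _ => 0))), (fun _ => 0). split; [|reflexivity].
    unfold vnorm. rewrite (rsum_ext _ _ (fun _ => 0)) by (intros; simpl; ring).
    rewrite rsum_const, Rmult_0_r, sqrt_0. lra.
Qed.

Lemma opnorm_le_entry_sum A : nonneg_mat n A -> opnorm n A <= entry_sum A.
Proof.
  intros HA. apply (proj2 (opnorm_is_lub A)). intros r [x [Hx ->]].
  eapply Rle_trans; [apply vnorm_mat_vec_le, Hx|].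
  apply rsum_le. intros i Hi. apply rsum_le. intros j Hj.
  rewrite Rabs_right; [lra|]. apply Rle_ge, HA; assumption.
Qed.

(* Test the operator norm against the unit vector [(1, ..., 1) / sqrt n]. *)
Lemma entry_sum_le_opnorm A : entry_sum A <= INR n * opnorm n A.
Proof.
  destruct (Nat.eq_dec n 0) as [Hn0|Hn0].
  { unfold entry_sum. rewrite Hn0. simpl. lra. }
  assert (Hn : 0 < INR n) by (apply lt_0_INR; lia).
  set (s := sqrt (INR n)).
  assert (Hs : 0 < s) by (apply sqrt_lt_R0, Hn).
  assert (Hss : s * s = INR n) by (apply sqrt_sqrt; lra).
  set (x := fun _ : nat => / s).
  assert (Hx : vnorm n x = 1).
  { unfold vnorm, x. rewrite rsum_const.
    replace (INR n * (/ s) ^ 2) with 1 by (rewrite <- Hss; field; lra). apply sqrt_1. }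
  set (y := mat_vec n A x).
  assert (Hy : rsum n y = entry_sum A / s).
  { unfold y, entry_sum, mat_vec, x, Rdiv. rewrite <- rsum_mult_r.
    apply rsum_ext. intros i _. rewrite <- rsum_mult_r. reflexivity. }
  assert (Hyop : vnorm n y <= opnorm n A).
  { apply (proj1 (opnorm_is_lub A)). exists x. split; [lra|reflexivity]. }
  pose proof (rsum_le_sqrt_vnorm y) as Hcs. fold s in Hcs. rewrite Hy in Hcs.
  assert (entry_sum A <= s * s * vnorm n y).
  { apply Rmult_le_compat_r with (r := s) in Hcs; [|lra]. unfold Rdiv in Hcs.
    rewrite Rmult_assoc, Rinv_l, Rmult_1_r in Hcs by lra. nra. }
  rewrite <- Hss. nra.
Qed.

End Norms.

Section Words.

Variable l : nat.

Lemma sum_words_le N g h :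
  (forall ks, Forall (fun k => (k < l)%nat) ks -> g ks <= h ks) ->
  sum_words l N g <= sum_words l N h.
Proof.
  revert g h. induction N as [|N IH]; intros g h H; simpl; [apply H; constructor|].
  apply rsum_le. intros k Hk. apply IH. intros ks Hks. apply H. constructor; assumption.
Qed.

Lemma sum_words_rsum N m (f : nat -> list nat -> R) :
  sum_words l N (fun ks => rsum m (fun p => f p ks)) = rsum m (fun p => sum_words l N (f p)).
Proof.
  revert f. induction N as [|N IH]; intros f; simpl; [reflexivity|].
  rewrite (rsum_ext l _ (fun k => rsum m (fun p => sum_words l N (fun ks => f p (k :: ks))))).
  - apply rsum_swap.
  - intros k _. apply (IH (fun p ks => f p (k :: ks))).
Qed.

Lemma sum_words_mult_l N c g : sum_words l N (fun ks => c * g ks) = c * sum_words l N g.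
Proof.
  revert g. induction N as [|N IH]; intros g; simpl; [reflexivity|].
  rewrite <- rsum_mult_l. apply rsum_ext. intros k _. apply (IH (fun ks => g (k :: ks))).
Qed.

Variables (n : nat) (F : nat -> mat) (E : mat).

Lemma word_prod_nonneg ks :
  (forall k, (k < l)%nat -> nonneg_mat n (F k)) -> nonneg_mat n E ->
  Forall (fun k => (k < l)%nat) ks -> nonneg_mat n (word_prod n F E ks).
Proof.
  intros hF hE Hks. induction Hks as [|k ks Hk _ IH]; simpl; [apply nonneg_mat_id|].
  apply nonneg_mat_mul; [apply nonneg_mat_mul|]; auto.
Qed.

Hypothesis hsum : forall i j, (i < n)%nat -> (j < n)%nat -> rsum l (fun k => F k i j) = mat_id i j.

Lemma sum_words_word_prod N i j : (i < n)%nat -> (j < n)%nat ->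
  sum_words l N (fun ks => word_prod n F E ks i j) = mat_pow n E N i j.
Proof.
  revert i j. induction N as [|N IH]; intros i j Hi Hj; [reflexivity|].
  assert (Hpart : forall m, rsum l (fun k => mat_mul n (F k) E i m) = E i m).
  { intros m. rewrite <- (mat_mul_id_l n E i m Hi). unfold mat_mul.
    rewrite rsum_swap. apply rsum_ext. intros p Hp. rewrite rsum_mult_r, hsum; auto. }
  cbn [sum_words word_prod mat_pow].
  change (mat_mul n E (mat_pow n E N) i j) with (rsum n (fun m => E i m * mat_pow n E N m j)).
  rewrite (rsum_ext l _ (fun k => rsum n (fun m => mat_mul n (F k) E i m * mat_pow n E N m j))).
  - rewrite rsum_swap. apply rsum_ext. intros m _. rewrite rsum_mult_r, Hpart. reflexivity.
  - intros k _.
    transitivity (rsum n (fun m => sum_words l N (fun ks =>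
                    mat_mul n (F k) E i m * word_prod n F E ks m j))).
    + apply (sum_words_rsum N n (fun m ks => mat_mul n (F k) E i m * word_prod n F E ks m j)).
    + apply rsum_ext. intros m Hm. rewrite sum_words_mult_l, IH; auto.
Qed.

End Words.

Theorem lemma3p4 (n l N : nat) (F : nat -> mat) (R : mat)
  (hF : forall k, (k < l)%nat -> nonneg_mat n (F k))
  (hsum : forall i j, (i < n)%nat -> (j < n)%nat ->
            rsum l (fun k => F k i j) = mat_id i j)
  (hR : nonneg_mat n R)
  (hN : (1 <= N)%nat) :
  sum_words l N
    (fun ks => opnorm n (word_prod n F (mat_exp n (mat_scale (/ INR N) R)) ks))
  <= INR n * opnorm n (mat_exp n R).
Proof.
  assert (HN : 0 < INR N) by (apply lt_0_INR; lia).
  set (A := mat_scale (/ INR N) R).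
  assert (HA : nonneg_mat n A)
    by (apply nonneg_mat_scale; [left; apply Rinv_0_lt_compat|]; assumption).
  set (E := mat_exp n A).
  assert (HE : nonneg_mat n E) by (apply mat_exp_nonneg, HA).
  apply Rle_trans with (sum_words l N (fun ks => entry_sum n (word_prod n F E ks))).
  { apply sum_words_le. intros ks Hks.
    apply opnorm_le_entry_sum, (word_prod_nonneg l); assumption. }
  apply Rle_trans with (entry_sum n (mat_exp n R)); [|apply entry_sum_le_opnorm].
  unfold entry_sum. rewrite sum_words_rsum. apply rsum_le. intros i Hi.
  rewrite (sum_words_rsum l N n (fun j ks => word_prod n F E ks i j)). apply rsum_le. intros j Hj.
  rewrite sum_words_word_prod by assumption.
  rewrite <- (mat_scale_inv (INR N) R) by lra.
  apply mat_pow_mat_exp_le; assumption.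
Qed.
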